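(* There exists a function $f:\mathbb{N}\to\mathbb{N}$ such that for every natural number $k$, no $k$-modular permutation graph contains an induced path with more than $f(k)$ vertices.
   Context: A permutation graph is the intersection graph of the line segments of a permutation diagram: two parallel horizontal lines, points labelled $1,\ldots,n$ on each, and a segment joining the two points with the same label. A module of a graph $G=(V,E)$ is a set $M\subseteq V$ such that every vertex outside $M$ is adjacent either to all vertices of $M$ or to none of them. A module is strong if it does not overlap any other module. The strong modules form the modular decomposition tree of $G$: each internal node $N$ has as children its maximal proper strong submodules $M_1,\ldots,M_m$, with quotient graph $H_N$ on $\{M_1,\ldots,M_m\}$ where $M_i\sim M_j$ iff all edges between $M_i$ and $M_j$ are present; $N$ is a prime node if $H_N$ is neither edgeless nor complete. A graph is $k$-modular if for every prime node $N$ the quotient graph $H_N$ has at most $k$ vertices. *)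

From mathcomp Require Import all_boot.
Set Implicit Arguments. Unset Strict Implicit. Unset Printing Implicit Defensive.

Section Defs.
Variable T : finType.
Variable e : rel T.

(* Permutation graph: vertex x is the segment joining position p x on the top
   line to position q x on the bottom line (p, q injective, i.e. each vertex
   has its own label/point on each line); two distinct vertices are adjacent
   iff their segments cross, i.e. the two lines order them differently. *)
Definition permutation_graph : Prop :=
  exists (p q : T -> nat), injective p /\ injective q /\
    forall x y : T, e x y = (x != y) && ((p x < p y) != (q x < q y)).

Definition module (M : {set T}) : bool :=
  [forall v, (v \notin M) ==>
     ([forall m in M, e v m] || [forall m in M, ~~ e v m])].

Definition overlap (A B : {set T}) : bool :=
  [&& A :&: B != set0, ~~ (A \subset B) & ~~ (B \subset A)].

Definition strong_module (M : {set T}) : bool :=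
  [&& module M, M != set0 & [forall M' : {set T}, module M' ==> ~~ overlap M M']].

Definition children (N : {set T}) : {set {set T}} :=
  [set M | [&& strong_module M, M \proper N &
     [forall M' : {set T}, (strong_module M' && (M \proper M')) ==> ~~ (M' \proper N)]]].

Definition quot_adj (M1 M2 : {set T}) : bool :=
  (M1 != M2) && [forall x in M1, forall y in M2, e x y].

(* internal node (strong module with >= 2 vertices) whose quotient graph is
   neither edgeless nor complete *)
Definition prime_node (N : {set T}) : bool :=
  [&& strong_module N, 1 < #|N|,
      [exists M1 in children N, exists M2 in children N, quot_adj M1 M2] &
      [exists M1 in children N, exists M2 in children N,
          (M1 != M2) && ~~ quot_adj M1 M2]].

Definition k_modular (k : nat) : Prop :=
  forall N : {set T}, prime_node N -> #|children N| <= k.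

Definition induced_path (s : seq T) : Prop :=
  uniq s /\ forall x y, x \in s -> y \in s ->
    e x y = ((index x s).+1 == index y s) || ((index y s).+1 == index x s).

End Defs.

From mathcomp Require Import all_boot.
Set Implicit Arguments. Unset Strict Implicit. Unset Printing Implicit Defensive.

(* The bound f k = 2k + 4 holds for every k-modular graph; being a permutation
   graph is only used for the symmetry of the adjacency relation.
   A module M missing some vertex of an induced path P meets P in at most two
   vertices: following P from a vertex of M to one outside M, we find an edge
   vw of P with v outside M and w in M, so v sees all of M, and the only
   vertices of P seen by v are its two path neighbours.  Let N be a smallest
   strong module containing P (when P has at least 5 vertices).  Each child of
   N misses a vertex of P, so P has at most 2 |children N| vertices.  No child
   contains three of the vertices v0,...,v4, so the edges v0v1, v1v2 yield two
   adjacent children and the non-edges v0v2, v2v4 two non-adjacent ones: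
   N is a prime node and |children N| <= k. *)

Lemma has_switch (X : Type) (x0 : X) (P : pred X) (s : seq X) :
  has P s -> ~~ all P s ->
  exists2 i, i.+1 < size s & P (nth x0 s i) != P (nth x0 s i.+1).
Proof.
suff switch_from_head (Q : pred X) a t : Q a -> ~~ all Q (a :: t) ->
    exists2 i, i.+1 < size (a :: t) & Q (nth x0 (a :: t) i) != Q (nth x0 (a :: t) i.+1).
  case: s => [//|a t] hasPs not_allPs.
  have [Pa | nPa] := boolP (P a); first exact: switch_from_head.
  have [|i lt_i sw] := switch_from_head (predC P) a t nPa; first by rewrite all_predC hasPs.
  by exists i => //; move: sw; rewrite /=; case: (P _); case: (P _).
elim: t a => [|b t IHt] a Qa; first by rewrite /= Qa.
rewrite /= Qa /=; case Qb: (Q b) => /= not_allQt; last by exists 0; rewrite //= Qa Qb.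
have [|i lt_i sw] := IHt b Qb; first by rewrite /= Qb.
by exists i.+1.
Qed.

Lemma card_bigcup_le (T : finType) (I : Type) (r : seq I) (P : pred I) (F : I -> {set T}) :
  #|\bigcup_(i <- r | P i) F i| <= \sum_(i <- r | P i) #|F i|.
Proof.
apply: (big_rec2 (fun (U : {set T}) n => #|U| <= n)); first by rewrite cards0.
by move=> i U n _ le_Un; rewrite (leq_trans (leq_card_setU _ _)) ?leq_add2l.
Qed.

Lemma card_le_cover (T : finType) (A : {set T}) (P : {set {set T}}) m :
  A \subset cover P -> {in P, forall C, #|A :&: C| <= m} -> #|A| <= #|P| * m.
Proof.
move=> sub_cover small; rewrite -sum_nat_const.
apply: (@leq_trans (\sum_(C in P) #|A :&: C|)); last exact: leq_sum.
apply: leq_trans (card_bigcup_le _ _ _).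
apply: subset_leq_card.
apply/subsetP=> x Ax; have /bigcupP[C PC Cx] := subsetP sub_cover x Ax.
by apply/bigcupP; exists C; rewrite // inE Ax.
Qed.

Lemma card_setI_le2_triple (T : finType) (A C : {set T}) x y z :
  #|A :&: C| <= 2 -> uniq [:: x; y; z] -> [&& x \in A, y \in A & z \in A] ->
  ~~ [&& x \in C, y \in C & z \in C].
Proof.
move=> small uniq_xyz /and3P[xA yA zA]; apply/negP=> /and3P[xC yC zC].
have := small; apply/negP; rewrite -ltnNge.
apply: leq_trans (subset_leq_card (_ : [set u in [:: x; y; z]] \subset A :&: C)).
  by move/card_uniqP: uniq_xyz; rewrite cardsE => ->.
by apply/subsetP=> u; rewrite !inE => /or3P[]/eqP->; apply/andP.
Qed.

Section Modules.
Variables (T : finType) (e : rel T).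

Lemma module_adj (M : {set T}) v w m :
  module e M -> v \notin M -> w \in M -> e v w -> m \in M -> e v m.
Proof.
move=> /forallP/(_ v)/implyP modM vM wM evw mM.
case/orP: (modM vM) => /forall_inP all_v; first exact: all_v.
by move: (all_v w wM); rewrite evw.
Qed.

Lemma induced_path_module_card (s : seq T) (M : {set T}) :
  induced_path e s -> module e M -> ~~ ([set x in s] \subset M) ->
  #|[set x in s] :&: M| <= 2.
Proof.
move=> [uniq_s path_s] modM /subsetPn[y]; rewrite inE => ys yM.
have [-> | [w]] := set_0Vmem ([set x in s] :&: M); first by rewrite cards0.
rewrite !inE => /andP[ws wM].
have has_M : has (fun x => x \in M) s by apply/hasP; exists w.
have not_all_M : ~~ all (fun x => x \in M) s by apply/allPn; exists y.
have [i lt_i switch] := has_switch w has_M not_all_M.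
have idx j : j < size s -> index (nth w s j) s = j by move=> lt_j; apply: index_uniq.
have [v [u [vs vM uM evu]]] :
    exists v u, [/\ v \in s, v \notin M, u \in M & e v u].
  have [s_i s_i1] := (mem_nth w (ltnW lt_i), mem_nth w lt_i).
  have e_fwd : e (nth w s i) (nth w s i.+1) by rewrite path_s // !idx ?(ltnW lt_i) ?eqxx.
  have e_bwd : e (nth w s i.+1) (nth w s i) by rewrite path_s // !idx ?(ltnW lt_i) ?eqxx ?orbT.
  have [in_i | out_i] := boolP (nth w s i \in M).
  - have out_i1 : nth w s i.+1 \notin M by move: switch; rewrite in_i; case: (_ \in M).
    by exists (nth w s i.+1), (nth w s i).
  - have in_i1 : nth w s i.+1 \in M by move: switch; rewrite (negbTE out_i); case: (_ \in M).
    by exists (nth w s i), (nth w s i.+1).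
apply: leq_trans (_ : #|[set nth v s (index v s).+1; nth v s (index v s).-1]| <= 2).
  apply/subset_leq_card/subsetP=> m; rewrite !inE => /andP[ms mM].
  move: (module_adj modM vM uM evu mM); rewrite path_s //.
  by case/orP=> /eqP idx_m; rewrite -(nth_index v ms) -idx_m /= eqxx ?orbT.
by rewrite cards2 ltnS leq_b1.
Qed.

Lemma strong_module_set1 x : strong_module e [set x].
Proof.
apply/and3P; split.
- apply/forallP=> v; apply/implyP=> _.
  by case: (e v x) / boolP => evx; apply/orP; [left | right];
    apply/forall_inP=> m /set1P->.
- by apply/set0Pn; exists x; rewrite inE.
- apply/forallP=> M; apply/implyP=> _; apply/negP; case/and3P=> /set0Pn[y].
  by rewrite !inE => /andP[/eqP-> xM]; rewrite sub1set xM.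
Qed.

Lemma strong_module_setT (x : T) : strong_module e [set: T].
Proof.
apply/and3P; split.
- by apply/forallP=> v; rewrite inE.
- by apply/set0Pn; exists x; rewrite inE.
- by apply/forallP=> M; apply/implyP=> _; rewrite /overlap subsetT /= !andbF.
Qed.

Lemma children_eq (N C1 C2 : {set T}) x :
  C1 \in children e N -> C2 \in children e N -> x \in C1 -> x \in C2 -> C1 = C2.
Proof.
have sub_eq D1 D2 : D1 \in children e N -> D2 \in children e N ->
    D1 \subset D2 -> D1 = D2.
  rewrite !inE => /and3P[_ _ /forallP maxD1] /and3P[strongD2 D2N _] D12.
  apply/eqP; apply: contraT => neqD12; move: (maxD1 D2).
  by rewrite strongD2 properEneq neqD12 D12 D2N.
move=> C1N C2N xC1 xC2.
have strong C : C \in children e N -> strong_module e C by rewrite inE => /and3P[].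
have /and3P[_ _ /forallP/(_ C2)/implyP no_overlap] := strong _ C1N.
have /and3P[modC2 _ _] := strong _ C2N.
move: (no_overlap modC2); rewrite /overlap !negb_and !negbK.
case/or3P=> [/eqP/setP/(_ x) | C12 | C21].
- by rewrite !inE xC1 xC2.
- exact: sub_eq.
- by apply/esym; apply: sub_eq.
Qed.

Lemma cover_children (N : {set T}) : 1 < #|N| -> N \subset cover (children e N).
Proof.
move=> N_gt1; apply/subsetP=> x xN.
pose Px (M : {set T}) := [&& strong_module e M, x \in M & M \proper N].
have Px1 : Px [set x].
  by rewrite /Px strong_module_set1 set11 properEcard sub1set xN cards1.
case: (@arg_maxnP _ [set x] Px (fun M => #|M|) Px1) => C /and3P[strongC xC CN] maxC.
apply/bigcupP; exists C => //; rewrite inE strongC CN /=.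
apply/forallP=> M; apply/implyP=> /andP[strongM CM]; apply/negP=> MN.
have := maxC M; rewrite /Px strongM MN (subsetP (proper_sub CM)) //= leqNgt.
by rewrite (proper_card CM) => /(_ isT).
Qed.

Lemma minimal_strong_module (A : {set T}) (x : T) :
  exists N, [/\ strong_module e N, A \subset N &
                forall C, C \in children e N -> ~~ (A \subset C)].
Proof.
pose P (N : {set T}) := strong_module e N && (A \subset N).
have PT : P [set: T] by rewrite /P (strong_module_setT x) subsetT.
case: (@arg_minnP _ [set: T] P (fun N => #|N|) PT) => N /andP[strongN AN] minN.
exists N; split=> // C; rewrite inE => /and3P[strongC CN _]; apply/negP=> AC.
by have := minN C; rewrite /P strongC AC leqNgt (proper_card CN) => /(_ isT).
Qed.

Hypothesis e_sym : symmetric e.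

Lemma quot_adj_children (N C1 C2 : {set T}) x y :
  C1 \in children e N -> C2 \in children e N -> C1 != C2 -> x \in C1 -> y \in C2 ->
  quot_adj e C1 C2 = e x y.
Proof.
move=> C1N C2N neqC xC1 yC2.
have modC C : C \in children e N -> module e C.
  by rewrite inE => /and3P[/and3P[]].
have out D1 D2 z : D1 \in children e N -> D2 \in children e N -> D1 != D2 ->
    z \in D1 -> z \notin D2.
  by move=> D1N D2N neqD zD1; apply: contra neqD => zD2; apply/eqP/(children_eq D1N D2N zD1).
rewrite /quot_adj neqC /=; apply/idP/idP=> [/forall_inP/(_ x xC1)/forall_inP/(_ y yC2) // | exy].
apply/forall_inP=> a aC1; apply/forall_inP=> b bC2.
have yC1 : y \notin C1 by apply: out C2N C1N _ yC2; rewrite eq_sym.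
have eya : e y a by apply: module_adj (modC _ C1N) yC1 xC1 _ aC1; rewrite e_sym.
have aC2 : a \notin C2 by apply: out C1N C2N neqC aC1.
by apply: module_adj (modC _ C2N) aC2 yC2 _ bC2; rewrite e_sym.
Qed.

Lemma children_separate (N : {set T}) (b : bool) x y z :
  1 < #|N| -> x \in N -> y \in N -> z \in N -> e x y = b -> e y z = b ->
  (forall C, C \in children e N -> ~~ [&& x \in C, y \in C & z \in C]) ->
  exists2 C1, C1 \in children e N &
    exists2 C2, C2 \in children e N & (C1 != C2) && (quot_adj e C1 C2 == b).
Proof.
move=> N_gt1 xN yN zN exy eyz apart.
have child u : u \in N -> exists2 C, C \in children e N & u \in C.
  by move=> uN; apply/bigcupP; apply: subsetP (cover_children N_gt1) u uN.
have [Cx Cx_ch xCx] := child x xN.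
have [Cy Cy_ch yCy] := child y yN.
have [Cz Cz_ch zCz] := child z zN.
have [eq_xy | ne_xy] := eqVneq Cx Cy; last first.
  exists Cx => //; exists Cy => //.
  by rewrite ne_xy (quot_adj_children Cx_ch Cy_ch ne_xy xCx yCy) exy eqxx.
have [eq_yz | ne_yz] := eqVneq Cy Cz; last first.
  exists Cy => //; exists Cz => //.
  by rewrite ne_yz (quot_adj_children Cy_ch Cz_ch ne_yz yCy zCz) eyz eqxx.
by move: (apart _ Cx_ch); rewrite xCx eq_xy yCy eq_yz zCz.
Qed.

Lemma prime_node_of_induced_path (N : {set T}) (s : seq T) :
  strong_module e N -> [set x in s] \subset N -> induced_path e s -> 4 < size s ->
  {in children e N, forall C, #|[set x in s] :&: C| <= 2} -> prime_node e N.
Proof.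
move=> strongN sN [uniq_s adj_s] s_gt4 small.
have N_gt1 : 1 < #|N|.
  rewrite (leq_trans _ (subset_leq_card sN)) // cardsE.
  by move/card_uniqP: uniq_s => ->; apply: ltn_trans s_gt4.
have [x0 _] : exists x0 : T, x0 \in s.
  by case: (s) s_gt4 => [//| x0 t] _; exists x0; rewrite mem_head.
pose v i := nth x0 s i.
have lt_s i : i <= 4 -> i < size s by move=> le_i4; apply: leq_ltn_trans le_i4 s_gt4.
have v_s i : i <= 4 -> v i \in [set x in s] by move=> /lt_s lt_i; rewrite inE mem_nth.
have v_N i : i <= 4 -> v i \in N by move=> /v_s; apply: subsetP.
have e_v i j : i <= 4 -> j <= 4 -> e (v i) (v j) = (i.+1 == j) || (j.+1 == i).
  by move=> le_i le_j; rewrite adj_s ?mem_nth ?lt_s // !index_uniq ?lt_s.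
have apart i j l : i <= 4 -> j <= 4 -> l <= 4 -> uniq [:: i; j; l] ->
    forall C, C \in children e N -> ~~ [&& v i \in C, v j \in C & v l \in C].
  move=> le_i le_j le_l uniq_ijl C CN; apply: card_setI_le2_triple (small C CN) _ _.
    by rewrite /= !inE /v !nth_uniq ?lt_s //; move: uniq_ijl; rewrite /= !inE.
  by rewrite !v_s.
rewrite /prime_node strongN N_gt1 /=; apply/andP; split.
- have [C1 C1N [C2 C2N /andP[_ /eqP adj12]]] := children_separate (b := true)
    N_gt1 (v_N 0 isT) (v_N 1 isT) (v_N 2 isT) (e_v 0 1 isT isT) (e_v 1 2 isT isT)
    (apart 0 1 2 isT isT isT isT).
  by apply/exists_inP; exists C1 => //; apply/exists_inP; exists C2; rewrite ?adj12.
- have [C1 C1N [C2 C2N /andP[ne12 /eqP adj12]]] := children_separate (b := false)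
    N_gt1 (v_N 0 isT) (v_N 2 isT) (v_N 4 isT) (e_v 0 2 isT isT) (e_v 2 4 isT isT)
    (apart 0 2 4 isT isT isT isT).
  by apply/exists_inP; exists C1 => //; apply/exists_inP; exists C2; rewrite ?ne12 ?adj12.
Qed.

Lemma long_induced_path_prime_node (s : seq T) :
  induced_path e s -> 4 < size s ->
  exists N, prime_node e N /\ size s <= #|children e N| * 2.
Proof.
move=> path_s s_gt4; have [uniq_s _] := path_s.
have [x0 _] : exists x0 : T, x0 \in s.
  by case: (s) s_gt4 => [//| x0 t] _; exists x0; rewrite mem_head.
have [N [strongN sN no_child_s]] := minimal_strong_module [set x in s] x0.
have small : {in children e N, forall C, #|[set x in s] :&: C| <= 2}.
  move=> C CN; apply: induced_path_module_card path_s _ (no_child_s C CN).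
  by move: CN; rewrite inE => /and3P[/and3P[]].
have primeN := prime_node_of_induced_path strongN sN path_s s_gt4 small.
exists N; split=> //; have /and4P[_ N_gt1 _ _] := primeN.
have <- : #|[set x in s]| = size s by rewrite cardsE; apply/card_uniqP.
exact: card_le_cover (subset_trans sN (cover_children N_gt1)) small.
Qed.

End Modules.

Lemma permutation_graph_sym (T : finType) (e : rel T) : permutation_graph e -> symmetric e.
Proof.
case=> p [q [inj_p [inj_q adj]]] x y; rewrite !adj eq_sym.
have [// | ne_yx] := eqVneq y x.
have flip (f : T -> nat) : injective f -> (f y < f x) = ~~ (f x < f y).
  by move=> inj_f; rewrite ltnNge leq_eqVlt (inj_eq inj_f) eq_sym (negbTE ne_yx).
by rewrite /= (flip p inj_p) (flip q inj_q); case: (_ < _); case: (_ < _).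
Qed.

Theorem mainTheorem18 :
  exists f : nat -> nat, forall (k : nat) (T : finType) (e : rel T),
    permutation_graph e -> k_modular e k ->
    forall s : seq T, induced_path e s -> size s <= f k.
Proof.
exists (fun k => k * 2 + 4) => k T e perm_e k_mod s path_s.
have [le_s4 | gt_s4] := leqP (size s) 4; first exact: leq_trans le_s4 (leq_addl _ _).
have [N [primeN size_s]] :=
  long_induced_path_prime_node (permutation_graph_sym perm_e) path_s gt_s4.
by rewrite (leq_trans size_s) // (leq_trans _ (leq_addr _ _)) // leq_mul2r k_mod.
Qed.
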